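(* Let $\mathfrak{S}=(\mathcal{X},\mathsf{S},\gamma,(\Lambda_{a})_{a\in\mathcal{A}})$ be a spectral decomposition system for the Euclidean space $\mathfrak{H}$ and let $\varphi\colon\mathcal{X}\to\left]-\infty,+\infty\right]$ be $\mathsf{S}$-invariant. Then $(\varphi\circ\gamma)^*=\varphi^*\circ\gamma$.
   Context: A Euclidean space is a finite-dimensional real inner product space; inner products are written $\langle\cdot,\cdot\rangle$ and norms $\|\cdot\|$. Let $\mathfrak{H}$ and $\mathcal{X}$ be Euclidean spaces, let $\mathsf{S}$ be a group acting on $\mathcal{X}$ by linear isometries, let $\gamma\colon\mathfrak{H}\to\mathcal{X}$, and let $(\Lambda_a)_{a\in\mathcal{A}}$ be a family of linear operators from $\mathcal{X}$ to $\mathfrak{H}$. The orbit of $x$ is $\mathsf{S}\cdot x=\{s\cdot x: s\in\mathsf{S}\}$; a map $f$ on $\mathcal{X}$ is $\mathsf{S}$-invariant if $f(s\cdot x)=f(x)$ for all $s,x$. The tuple is a spectral decomposition system for $\mathfrak{H}$ if: [A] every $\Lambda_a$ is an isometry; [B] there exists an $\mathsf{S}$-invariant $\tau\colon\mathcal{X}\to\mathcal{X}$ with $\tau(x)\in\mathsf{S}\cdot x$ for all $x$ and $\gamma\circ\Lambda_a=\tau$ for all $a$; [C] for every $X\in\mathfrak{H}$ there is $a$ with $X=\Lambda_a\gamma(X)$; [D] $\langle X,Y\rangle\leq\langle\gamma(X),\gamma(Y)\rangle$ for all $X,Y\in\mathfrak{H}$. The Fenchel conjugate of $f$ on a Euclidean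 space $\mathcal{H}$ is $f^*(y)=\sup_{x\in\mathcal{H}}(\langle x,y\rangle-f(x))$. *)

From HB Require Import structures.
From mathcomp Require Import all_boot all_order all_algebra.
From mathcomp Require Import boolp classical_sets reals constructive_ereal ereal.
Set Implicit Arguments. Unset Strict Implicit. Unset Printing Implicit Defensive.
Import Order.TTheory GRing.Theory Num.Theory.
Local Open Scope ring_scope.
Local Open Scope classical_set_scope.

(* A Euclidean space: a finite-dimensional real vector space (vectType R)
   together with an inner product ip. *)
Definition inner_product (R : realType) (V : vectType R) (ip : V -> V -> R) :=
  [/\ (forall x y, ip x y = ip y x),
      (forall a x y z, ip (a *: x + y) z = a * ip x z + ip y z)
    & (forall x, x != 0 -> 0 < ip x x)].

Definition ipnorm (R : realType) (V : vectType R) (ip : V -> V -> R) (x : V) : R :=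
  Num.sqrt (ip x x).

Definition linear_map (R : realType) (U V : vectType R) (f : U -> V) :=
  forall a x y, f (a *: x + y) = a *: f x + f y.

Definition is_group (G : Type) (mul : G -> G -> G) (one : G) (inv : G -> G) :=
  [/\ (forall g h k, mul g (mul h k) = mul (mul g h) k),
      (forall g, mul one g = g)
    & (forall g, mul (inv g) g = one)].

Definition isometric_action (R : realType) (X : vectType R) (ip : X -> X -> R)
  (G : Type) (mul : G -> G -> G) (one : G) (act : G -> X -> X) :=
  [/\ (forall x, act one x = x),
      (forall g h x, act (mul g h) x = act g (act h x)),
      (forall g, linear_map (act g))
    & (forall g x, ipnorm ip (act g x) = ipnorm ip x)].

Definition S_invariant (G : Type) (X T : Type) (act : G -> X -> X) (f : X -> T) :=
  forall g x, f (act g x) = f x.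

Definition in_orbit (G : Type) (X : Type) (act : G -> X -> X) (y x : X) :=
  exists g, y = act g x.

Definition spectral_decomposition_system (R : realType)
  (H : vectType R) (ipH : H -> H -> R)
  (X : vectType R) (ipX : X -> X -> R)
  (G : Type) (act : G -> X -> X)
  (gamma : H -> X) (A : Type) (Lambda : A -> X -> H) :=
  [/\ (* [A] *) (forall a, linear_map (Lambda a) /\
                   forall x, ipnorm ipH (Lambda a x) = ipnorm ipX x),
      (* [B] *) (exists tau : X -> X,
                   [/\ S_invariant act tau,
                       (forall x, in_orbit act (tau x) x)
                     & (forall a x, gamma (Lambda a x) = tau x)]),
      (* [C] *) (forall Y : H, exists a, Y = Lambda a (gamma Y))
    & (* [D] *) (forall Y Z : H, ipH Y Z <= ipX (gamma Y) (gamma Z))].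

Definition fenchel_conj (R : realType) (V : Type) (ip : V -> V -> R)
  (f : V -> \bar R) (y : V) : \bar R :=
  ereal_sup [set ((ip x y)%:E - f x)%E | x in [set: V]].

From HB Require Import structures.
From mathcomp Require Import all_boot all_order all_algebra.
From mathcomp Require Import boolp classical_sets reals constructive_ereal ereal.
From mathcomp Require Import lra.
Import Order.TTheory GRing.Theory Num.Theory.
Local Open Scope ring_scope.

(* Each term of one Fenchel supremum is dominated by a term of the other.
   A term of (phi o gamma)^* at Y, indexed by Z, is bounded via [D] by the
   term of phi^* at gamma Y indexed by gamma Z.  Conversely, choosing a with
   Y = Lambda_a (gamma Y) by [C], the term of phi^* indexed by x equals the
   term of (phi o gamma)^* indexed by Lambda_a x: the isometry Lambda_a
   preserves inner products, and by [B] gamma (Lambda_a x) lies in the orbit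
   of x, on which phi is constant. *)

Section InnerProduct.
Variables (R : realType) (V : vectType R) (ip : V -> V -> R).
Hypothesis ip_ip : inner_product ip.

Lemma ipDl x y z : ip (x + y) z = ip x z + ip y z.
Proof. by case: ip_ip => _ ipZDl _; rewrite -{1}(scale1r x) ipZDl mul1r. Qed.

Lemma ipDr x y z : ip z (x + y) = ip z x + ip z y.
Proof. by case: ip_ip => ipC _ _; rewrite ipC ipDl (ipC x) (ipC y). Qed.

Lemma ip0l z : ip 0 z = 0.
Proof. by have := ipDl 0 0 z; rewrite addr0; lra. Qed.

Lemma ipxx_ge0 x : 0 <= ip x x.
Proof.
case: ip_ip => _ _ ip_gt0.
by have [->|/ip_gt0/ltW //] := eqVneq x 0; rewrite ip0l.
Qed.

Lemma ipDD x y : ip (x + y) (x + y) = ip x x + 2 * ip x y + ip y y.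
Proof. by case: ip_ip => ipC _ _; rewrite !ipDl !ipDr (ipC y x); lra. Qed.

End InnerProduct.

Lemma linear_isometry_ip {R : realType} {U V : vectType R}
    {ipU : U -> U -> R} {ipV : V -> V -> R}
    (ipU_ip : inner_product ipU) (ipV_ip : inner_product ipV) {L : U -> V} :
  linear_map L -> (forall x, ipnorm ipV (L x) = ipnorm ipU x) ->
  forall x y, ipV (L x) (L y) = ipU x y.
Proof.
move=> L_lin L_iso x y.
have Lxx z : ipV (L z) (L z) = ipU z z.
  by apply/eqP; rewrite -eqr_sqrt ?ipxx_ge0 //; apply/eqP; exact: L_iso.
have LD : L (x + y) = L x + L y by rewrite -{1}(scale1r x) L_lin scale1r.
by have := Lxx (x + y); rewrite LD !ipDD // !Lxx; lra.
Qed.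

Lemma fenchel_conj_le {R : realType} {U V : Type}
    {ipU : U -> U -> R} {ipV : V -> V -> R}
    {f : U -> \bar R} {g : V -> \bar R} {y : U} {w : V} :
  (forall x, exists z, ((ipU x y)%:E - f x <= (ipV z w)%:E - g z)%E) ->
  (fenchel_conj ipU f y <= fenchel_conj ipV g w)%E.
Proof.
move=> dominated; apply: ge_ereal_sup => _ [x _ <-].
have [z le_xz] := dominated x.
by apply: le_trans le_xz _; apply: ereal_sup_ubound; exists z.
Qed.

Section SpectralDecompositionSystem.
Context {R : realType} {H : vectType R} {ipH : H -> H -> R}.
Context {X : vectType R} {ipX : X -> X -> R}.
Context {G : Type} {act : G -> X -> X}.
Context {gamma : H -> X} {A : Type} {Lambda : A -> X -> H}.
Hypotheses (ipH_ip : inner_product ipH) (ipX_ip : inner_product ipX).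
Hypothesis SDS : spectral_decomposition_system ipH ipX act gamma Lambda.

Lemma invariant_gamma_Lambda (T : Type) (f : X -> T) a x :
  S_invariant act f -> f (gamma (Lambda a x)) = f x.
Proof.
case: SDS => _ [tau [_ tau_orbit gamma_Lambda]] _ _ f_inv.
by rewrite gamma_Lambda; have [s ->] := tau_orbit x; rewrite f_inv.
Qed.

Lemma ip_Lambda_gamma a x Y :
  Y = Lambda a (gamma Y) -> ipH (Lambda a x) Y = ipX x (gamma Y).
Proof.
case: SDS => Lambda_iso _ _ _ {1}->; have [L_lin L_iso] := Lambda_iso a.
exact: (linear_isometry_ip ipX_ip ipH_ip L_lin L_iso).
Qed.

End SpectralDecompositionSystem.

Theorem corollary5p3 (R : realType)
  (H : vectType R) (ipH : H -> H -> R) (ipH_ip : inner_product ipH)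
  (X : vectType R) (ipX : X -> X -> R) (ipX_ip : inner_product ipX)
  (G : Type) (mul : G -> G -> G) (one : G) (inv : G -> G)
  (G_grp : is_group mul one inv)
  (act : G -> X -> X) (act_iso : isometric_action ipX mul one act)
  (gamma : H -> X) (A : Type) (Lambda : A -> X -> H)
  (SDS : spectral_decomposition_system ipH ipX act gamma Lambda)
  (phi : X -> \bar R) (phi_nm : forall x, phi x != -oo%E)
  (phi_inv : S_invariant act phi) :
  forall Y : H, fenchel_conj ipH (fun Z => phi (gamma Z)) Y
                = fenchel_conj ipX phi (gamma Y).
Proof.
move=> Y; apply/le_anti/andP; split; apply: fenchel_conj_le.
- move=> Z; exists (gamma Z); apply: leeB => //.
  by rewrite lee_fin; case: SDS => _ _ _; apply.
- move=> x; have [a Y_eq] : exists a, Y = Lambda a (gamma Y) by case: SDS.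
  exists (Lambda a x).
  by rewrite (ip_Lambda_gamma ipH_ip ipX_ip SDS) // (invariant_gamma_Lambda SDS).
Qed.
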